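(* Let $\Sigma=(I,X,\mathcal U,\phi,Y,h)$ be a forward complete control system with outputs. Then the following statements are equivalent: (1) $\Sigma$ is IOS; (2) $\Sigma$ is OUAG, OCEP and BORS; (3) $\Sigma$ is OUAG, OULS and BORS; (4) $\Sigma$ is OUAG and OUGS; (5) $\Sigma$ is OCAG and OULS.
   Context: Let $I\in\{\mathbb N_0,\mathbb R_0^+\}$. A forward complete control system with outputs $\Sigma=(I,X,\mathcal U,\phi,Y,h)$ consists of: a normed space $(X,\|\cdot\|_X)$; a vector space $U$ and a normed linear subspace $(\mathcal U,\|\cdot\|_{\mathcal U})$ of $\{u:I\to U\}$ such that for all $u\in\mathcal U$ and $\tau\in I$, $u(\cdot+\tau)\in\mathcal U$ with $\|u(\cdot+\tau)\|_{\mathcal U}\le\|u\|_{\mathcal U}$, and for all $t_2\ge t_1\ge 0$ the function $u|_{[t_1,t_2]}$ (equal to $u$ on $[t_1,t_2]$ and $0$ elsewhere) lies in $\mathcal U$ with $\|u|_{[t_1,t_2]}\|_{\mathcal U}\le\|u\|_{\mathcal U}$; a map $\phi:I\times X\times\mathcal U\to X$ with $\phi(0,x,u)=x$, causality (if $u,\tilde u\in\mathcal U$ agree on $[0,t]$ then $\phi(t,x,u)=\phi(t,x,\tilde u)$), and cocycle property $\phi(t+s,x,u)=\phi(s,\phi(t,x,u),u(t+\cdot))$ for all $t,s\in I$; a normed space $(Y,\|\cdot\|_Y)$ and a map $h:X\times U\to Y$. Write $y(t,x,u)=h(\phi(t,x,u),u(t))$. $B_r=\{x\in X:\|x\|_X<r\}$,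 $B_{r,\mathcal U}=\{u\in\mathcal U:\|u\|_{\mathcal U}<r\}$. $\mathcal K$: continuous strictly increasing $\gamma:\mathbb R_0^+\to\mathbb R_0^+$ with $\gamma(0)=0$; $\mathcal K_\infty$: unbounded $\mathcal K$-functions; $\mathcal L$: continuous decreasing functions tending to $0$; $\mathcal{KL}$: $\beta$ with $\beta(\cdot,t)\in\mathcal K$ for all $t$ and $\beta(r,\cdot)\in\mathcal L$ for all $r>0$. All statements below quantify over $x\in X$, $u\in\mathcal U$, $t\in I$. IOS: $\exists\beta\in\mathcal{KL},\gamma\in\mathcal K_\infty$ with $\|y(t,x,u)\|_Y\le\beta(\|x\|_X,t)+\gamma(\|u\|_{\mathcal U})$ for all $x,u,t$. OCEP: for every $\tau\in I$ and $\varepsilon>0$ there is $\delta>0$ such that $t\le\tau$, $\|x\|_X\le\delta$, $\|u\|_{\mathcal U}\le\delta$ imply $\|y(t,x,u)\|_Y\le\varepsilon$. BORS: for all $C>0$, $\tau\in I$: $\sup\{\|y(t,x,u)\|_Y:\|x\|_X<C,\|u\|_{\mathcal U}<C,t<\tau\}<\infty$. OULS: $\exists r>0,\sigma,\gamma\in\mathcal K_\infty$ such that $\|y(t,x,u)\|_Y\le\sigma(\|x\|_X)+\gamma(\|u\|_{\mathcal U})$ for all $x\in B_r,u\in B_{r,\mathcal U},t\in I$. OUGS: $\exists\sigma,\gamma\in\mathcal K_\infty$ with the same inequality for all $x\in X,u\in\mathcal U,t\in I$. OUAG: $\exists\gamma\in\mathcal K_\infty$ such that for all $\varepsilon,r,s>0$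 there is $\tau\in I$ with $\|y(t,x,u)\|_Y\le\varepsilon+\gamma(\|u\|_{\mathcal U})$ for all $x\in B_r$, $u\in B_{s,\mathcal U}$, $t\ge\tau$. OCAG: $\exists\beta\in\mathcal{KL},\gamma\in\mathcal K_\infty,c\ge0$ with $\|y(t,x,u)\|_Y\le\beta(\|x\|_X+c,t)+\gamma(\|u\|_{\mathcal U})$ for all $x,u,t$. *)

From HB Require Import structures.
From mathcomp Require Import all_boot all_order all_algebra.
From mathcomp Require Import all_classical all_reals all_analysis.
Set Implicit Arguments. Unset Strict Implicit. Unset Printing Implicit Defensive.
Import Order.TTheory GRing.Theory Num.Theory.
Import numFieldNormedType.Exports.
Local Open Scope classical_set_scope.
Local Open Scope ring_scope.

Inductive timedom := TDiscrete | TContinuous.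

Definition inI (R : realType) (I : timedom) (t : R) : Prop :=
  0 <= t /\ (I = TDiscrete -> exists n : nat, t = n%:R).

Definition time (R : realType) (I : timedom) := {t : R | inI I t}.

Lemma inI0 (R : realType) (I : timedom) : inI I (0 : R).
Proof. by split=> // _; exists 0%N. Qed.

Lemma inI_add (R : realType) (I : timedom) (a b : R) :
  inI I a -> inI I b -> inI I (a + b).
Proof.
move=> [a0 Ha] [b0 Hb]; split; first exact: addr_ge0.
move=> HI; have [n ->] := Ha HI; have [m ->] := Hb HI.
by exists (n + m)%N; rewrite natrD.
Qed.

Definition t0 (R : realType) (I : timedom) : time R I := exist _ 0 (inI0 R I).

Definition tadd (R : realType) (I : timedom) (t s : time R I) : time R I :=
  exist _ (proj1_sig t + proj1_sig s) (inI_add (proj2_sig t) (proj2_sig s)).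

Definition shift (R : realType) (I : timedom) (U : Type) (u : time R I -> U)
  (tau : time R I) : time R I -> U := fun s => u (tadd s tau).

Definition restr (R : realType) (I : timedom) (U : lmodType R)
  (u : time R I -> U) (t1 t2 : R) : time R I -> U :=
  fun s => if (t1 <= proj1_sig s) && (proj1_sig s <= t2) then u s else 0.

Record ControlSystem (R : realType) (I : timedom) (X : normedModType R)
    (U : lmodType R) (Y : normedModType R) := {
  Uin : set (time R I -> U);
  Unorm : (time R I -> U) -> R;
  Uin0 : Uin (fun _ => 0);
  UinD : forall u v, Uin u -> Uin v -> Uin (fun t => u t + v t);
  UinZ : forall (a : R) u, Uin u -> Uin (fun t => a *: u t);
  Unorm_ge0 : forall u, Uin u -> 0 <= Unorm u;
  Unorm_eq0 : forall u, Uin u -> Unorm u = 0 -> u = (fun _ => 0);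
  Unorm0 : Unorm (fun _ => 0) = 0;
  UnormZ : forall (a : R) u, Uin u -> Unorm (fun t => a *: u t) = `|a| * Unorm u;
  UnormD : forall u v, Uin u -> Uin v ->
    Unorm (fun t => u t + v t) <= Unorm u + Unorm v;
  Uin_shift : forall u tau, Uin u -> Uin (shift u tau);
  Unorm_shift : forall u tau, Uin u -> Unorm (shift u tau) <= Unorm u;
  Uin_restr : forall u (t1 t2 : R), 0 <= t1 -> t1 <= t2 -> Uin u -> Uin (restr u t1 t2);
  Unorm_restr : forall u (t1 t2 : R), 0 <= t1 -> t1 <= t2 -> Uin u ->
    Unorm (restr u t1 t2) <= Unorm u;
  phi : time R I -> X -> (time R I -> U) -> X;
  phi_t0 : forall x u, Uin u -> phi (t0 R I) x u = x;
  phi_causal : forall t x u v, Uin u -> Uin v ->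
    (forall s : time R I, proj1_sig s <= proj1_sig t -> u s = v s) ->
    phi t x u = phi t x v;
  phi_cocycle : forall t s x u, Uin u ->
    phi (tadd t s) x u = phi s (phi t x u) (shift u t);
  h : X -> U -> Y }.

Arguments ControlSystem : clear implicits.
Arguments Uin {R I X U Y}.
Arguments Unorm {R I X U Y}.
Arguments phi {R I X U Y}.
Arguments h {R I X U Y}.

Definition yout R I X U Y (S : ControlSystem R I X U Y) (t : time R I) (x : X)
  (u : time R I -> U) : Y := h S (phi S t x u) (u t).

Definition classK (R : realType) (g : R -> R) : Prop :=
  {within [set r : R | 0 <= r], continuous g} /\
  (forall r, 0 <= r -> 0 <= g r) /\
  (forall a b, 0 <= a -> a < b -> g a < g b) /\
  g 0 = 0.

Definition classKinf (R : realType) (g : R -> R) : Prop :=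
  classK g /\ (forall M : R, exists r, 0 <= r /\ M < g r).

Definition classL (R : realType) (g : R -> R) : Prop :=
  {within [set r : R | 0 <= r], continuous g} /\
  (forall r, 0 <= r -> 0 <= g r) /\
  (forall a b, 0 <= a -> a < b -> g b < g a) /\
  (g r @[r --> +oo] --> 0).

Definition classKL (R : realType) (b : R -> R -> R) : Prop :=
  (forall t, 0 <= t -> classK (fun r => b r t)) /\
  (forall r, 0 < r -> classL (b r)).

Section Props.
Variables (R : realType) (I : timedom) (X : normedModType R) (U : lmodType R)
  (Y : normedModType R) (S : ControlSystem R I X U Y).
Local Notation y := (yout S).
Local Notation tv := (@proj1_sig R (inI I)).

Definition IOS : Prop :=
  exists beta gamma, classKL beta /\ classKinf gamma /\
  forall x u (t : time R I), Uin S u ->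
    `|y t x u| <= beta `|x| (tv t) + gamma (Unorm S u).

Definition OCEP : Prop :=
  forall (tau : time R I) (eps : R), 0 < eps -> exists delta : R, 0 < delta /\
  forall x u (t : time R I), Uin S u -> tv t <= tv tau -> `|x| <= delta ->
    Unorm S u <= delta -> `|y t x u| <= eps.

Definition BORS : Prop :=
  forall (C : R) (tau : time R I), 0 < C -> exists M : R,
  forall x u (t : time R I), Uin S u -> `|x| < C -> Unorm S u < C ->
    tv t < tv tau -> `|y t x u| <= M.

Definition OULS : Prop :=
  exists (r : R) sigma gamma, 0 < r /\ classKinf sigma /\ classKinf gamma /\
  forall x u (t : time R I), Uin S u -> `|x| < r -> Unorm S u < r ->
    `|y t x u| <= sigma `|x| + gamma (Unorm S u).

Definition OUGS : Prop :=
  exists sigma gamma, classKinf sigma /\ classKinf gamma /\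
  forall x u (t : time R I), Uin S u ->
    `|y t x u| <= sigma `|x| + gamma (Unorm S u).

Definition OUAG : Prop :=
  exists gamma, classKinf gamma /\
  forall eps r s : R, 0 < eps -> 0 < r -> 0 < s -> exists tau : time R I,
  forall x u (t : time R I), Uin S u -> `|x| < r -> Unorm S u < s ->
    tv tau <= tv t -> `|y t x u| <= eps + gamma (Unorm S u).

Definition OCAG : Prop :=
  exists beta gamma (c : R), classKL beta /\ classKinf gamma /\ 0 <= c /\
  forall x u (t : time R I), Uin S u ->
    `|y t x u| <= beta (`|x| + c) (tv t) + gamma (Unorm S u).
End Props.

From HB Require Import structures.
From mathcomp Require Import all_boot all_order all_algebra.
From mathcomp Require Import all_classical all_reals all_analysis.
From mathcomp Require Import lra.
Set Implicit Arguments. Unset Strict Implicit. Unset Printing Implicit Defensive.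
Import Order.TTheory GRing.Theory Num.Theory.
Import numFieldNormedType.Exports.
Local Open Scope classical_set_scope.
Local Open Scope ring_scope.

(* The implications out of IOS are direct estimates.  Conversely, OUAG together
   with OCEP and BORS gives OUGS by splitting time at an attraction time, and OUAG
   together with OUGS gives IOS: when |x| dominates the input norm, the excess
   |y| - gamma(|u|) is uniformly small for small |x|, bounded on balls and
   uniformly attractive, and every such family of bounds has a KL majorant
   min(sigma r, rho r * ell t) + r / (t + 1).  Both constructions of comparison
   functions rest on one fact: a nondecreasing function vanishing at 0 lies below a
   continuous K-infinity function, obtained by piecewise linear interpolation on the
   grids 1/(k+1) and k. *)

Section PiecewiseLinear.
Variable R : realType.
Implicit Types (a : nat -> R) (s x : R).

Definition ramp x : R := Num.min (Num.max x 0) 1.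

Lemma ramp_le0 x : x <= 0 -> ramp x = 0.
Proof. by move=> x0; rewrite /ramp (max_r x0) min_l ?ler01. Qed.

Lemma ramp_ge1 x : 1 <= x -> ramp x = 1.
Proof. by move=> x1; rewrite /ramp min_r // le_max x1. Qed.

Lemma ramp_ge0 x : 0 <= ramp x.
Proof. by rewrite /ramp le_min le_max lexx orbT ler01. Qed.

Lemma ramp_le1 x : ramp x <= 1.
Proof. by rewrite /ramp ge_min lexx orbT. Qed.

Lemma ramp_homo : {homo ramp : x y / x <= y}.
Proof.
move=> x y xy; rewrite /ramp le_min !ge_min lexx orbT andbT le_max !ge_max.
have [y0|y0] := leP 0 y; first by rewrite xy.
by rewrite (le_trans xy (ltW y0)) lexx orbT.
Qed.

Lemma ramp_continuous : continuous ramp.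
Proof.
move=> x; apply: (@continuous_min R R (Num.max ^~ 0) (fun=> 1)); last exact: cvg_cst.
by apply: (@continuous_max R R id (fun=> 0)); [exact: cvg_id|exact: cvg_cst].
Qed.

(* Interpolates [k |-> \sum_(0 <= n < k.+1) a n] linearly between consecutive
   integers [k >= -1]; only the terms with [n < s + 1] are nonzero. *)
Definition psum_interp a s : R :=
  \sum_(0 <= n < (Num.truncn s).+2) a n * ramp (s - n%:R + 1).

Lemma truncn_add2 s : s + 1 <= ((Num.truncn s).+2)%:R.
Proof. by have := truncnS_gt s; rewrite -!natr1; lra. Qed.

Lemma psum_interpE a s N : s + 1 <= N%:R ->
  psum_interp a s = \sum_(0 <= n < N) a n * ramp (s - n%:R + 1).
Proof.
have drop_tail M1 M2 : s + 1 <= M1%:R -> (M1 <= M2)%N ->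
    \sum_(0 <= n < M2) a n * ramp (s - n%:R + 1) =
    \sum_(0 <= n < M1) a n * ramp (s - n%:R + 1).
  move=> sM1 M12; rewrite (@big_cat_nat _ _ _ M1) //=.
  rewrite [X in _ + X]big1_seq ?addr0 // => n /andP[_].
  rewrite mem_index_iota => /andP[M1n _]; rewrite ramp_le0 ?mulr0 //.
  have : M1%:R <= n%:R :> R by rewrite ler_nat.
  lra.
move=> sN; have [N2|N2] := leqP N (Num.truncn s).+2; first exact: drop_tail.
exact/esym/drop_tail/ltnW/N2/truncn_add2.
Qed.

Lemma psum_interp_continuous a : continuous (psum_interp a).
Proof.
have partial_continuous M :
    continuous (fun s => \sum_(0 <= n < M) a n * ramp (s - n%:R + 1)).
  elim: M => [|M IH] x; first by under eq_fun do rewrite big_geq //; exact: cvg_cst.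
  under eq_fun do rewrite big_nat_recr //=.
  apply: cvgD; first exact: IH.
  apply: cvgM; first exact: cvg_cst.
  apply: (@continuous_comp _ _ _ (fun s => s - M%:R + 1) ramp).
    by apply: cvgD; [apply: cvgB; [exact: cvg_id|exact: cvg_cst]|exact: cvg_cst].
  exact: ramp_continuous.
move=> x; set N := (Num.truncn x).+3.
have xN : x + 2 <= N%:R by have := truncn_add2 x; rewrite /N -(natr1 _.+2); lra.
have near_eq : \forall s \near x,
    \sum_(0 <= n < N) a n * ramp (s - n%:R + 1) = psum_interp a s.
  apply/nbhs_normP; exists 1 => //= s; rewrite /ball_ /= ltr_norml => /andP[sx _].
  by rewrite (@psum_interpE a s N) //; lra.
apply: cvg_trans (near_eq_cvg near_eq) _; rewrite (@psum_interpE a x N); last lra.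
exact: partial_continuous.
Qed.

Section NonnegativeCoefficients.
Variable a : nat -> R.
Hypothesis a_ge0 : forall n, 0 <= a n.

Lemma psum_interp_ge0 s : 0 <= psum_interp a s.
Proof. by apply: sumr_ge0 => n _; rewrite mulr_ge0 ?ramp_ge0. Qed.

Lemma psum_interp_homo : {homo psum_interp a : s s' / s <= s'}.
Proof.
move=> s s' ss'; rewrite (@psum_interpE a s (Num.truncn s').+2); last first.
  by apply: le_trans (truncn_add2 s'); rewrite lerD2r.
by apply: ler_sum => n _; rewrite ler_wpM2l // ramp_homo // !lerD2r.
Qed.

Lemma psum_interp_le_sum s k : s + 1 <= k%:R ->
  psum_interp a s <= \sum_(0 <= n < k) a n.
Proof.
move=> sk; rewrite (psum_interpE _ sk).
by apply: ler_sum => n _; rewrite ler_piMr ?ramp_le1.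
Qed.

Lemma psum_interp_ge_sum s k : k%:R <= s + 1 ->
  \sum_(0 <= n < k) a n <= psum_interp a s.
Proof.
move=> ks; rewrite (@psum_interpE a s (k + (Num.truncn s).+2)); last first.
  by rewrite natrD; have := truncn_add2 s; have : (0 : R) <= k%:R by []; lra.
rewrite [X in _ <= X](@big_cat_nat _ _ _ k) ?leq_addr //= -[X in X <= _]addr0.
apply: lerD; last by apply: sumr_ge0 => n _; rewrite mulr_ge0 ?ramp_ge0.
apply: ler_sum_nat => n /andP[_ nk]; rewrite ramp_ge1 ?mulr1 //.
have : n.+1%:R <= k%:R :> R by rewrite ler_nat.
by rewrite -natr1; lra.
Qed.

End NonnegativeCoefficients.
End PiecewiseLinear.

Section MonotoneMajorant.
Variables (R : realType) (b : R -> R).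
Hypothesis b_ge0 : forall r, 0 <= b r.
Hypothesis b_homo : forall r s, 0 <= r -> r <= s -> b r <= b s.
Hypothesis b_small : forall e, 0 < e ->
  exists d, 0 < d /\ forall r, 0 <= r -> r <= d -> b r <= e.

Let vgrid (n : nat) := b (n.+1%:R)^-1.
Let vstep (n : nat) := vgrid n - vgrid n.+1.

(* [interp_inv k.+1 = vgrid k], so [low (k.+2%:R)^-1 = b (k.+1%:R)^-1]: on the
   grid 1/(k+2), [low] takes the value of [b] one grid point further right. *)
Let interp_inv (s : R) := vgrid 0 - psum_interp vstep (s - 2).
Let low (r : R) := if 0 < r then interp_inv (r^-1 - 1) else 0.
Let high (r : R) := psum_interp (fun n => b n.+2%:R) (r - 1).

Let b_at0 : b 0 = 0.
Proof.
apply/eqP; rewrite eq_le b_ge0 andbT; apply/ler_addgt0Pr => e e0.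
have [d [d0 bd]] := b_small e0; rewrite add0r; apply: le_trans (bd d _ _) => //.
  exact: b_homo (ltW d0).
exact: ltW.
Qed.

Let vstep_ge0 n : 0 <= vstep n.
Proof.
rewrite subr_ge0 b_homo ?invr_ge0 //.
by rewrite lef_pV2 ?posrE // ler_nat.
Qed.

Let sum_vstep k : \sum_(0 <= n < k) vstep n = vgrid 0 - vgrid k.
Proof.
rewrite (@telescope_sumr_eq _ _ _ (fun n => - vgrid n)) // => [|n _].
  by rewrite opprK addrC.
by rewrite /vstep opprK addrC.
Qed.

Let interp_inv_ge s k : s <= k.+1%:R -> vgrid k <= interp_inv s.
Proof.
move=> sk; have := @psum_interp_le_sum _ _ vstep_ge0 (s - 2) k.
by rewrite sum_vstep -natr1 /interp_inv; lra.
Qed.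

Let interp_inv_le s k : k.+1%:R <= s -> interp_inv s <= vgrid k.
Proof.
move=> ks; have := @psum_interp_ge_sum _ _ vstep_ge0 (s - 2) k.
by rewrite sum_vstep -natr1 /interp_inv; lra.
Qed.

Let interp_inv_ge0 s : 0 <= interp_inv s.
Proof.
apply: le_trans (interp_inv_ge (ltW (truncnS_gt s))); exact: b_ge0.
Qed.

Let low_ge0 r : 0 <= low r.
Proof. by rewrite /low; case: ifP => // _; exact: interp_inv_ge0. Qed.

Let low_homo r s : 0 <= r -> r <= s -> low r <= low s.
Proof.
move=> r0 rs; rewrite /low; case: ifP => [r_gt0|_]; last exact: low_ge0.
rewrite (lt_le_trans r_gt0 rs) /interp_inv lerD2l lerN2.
apply: psum_interp_homo; first exact: vstep_ge0.
by rewrite !lerD2r lef_pV2 ?posrE ?(lt_le_trans r_gt0 rs).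
Qed.

Let low_ge r : 0 < r -> r <= 1 -> b r <= low r.
Proof.
move=> r0 r1; rewrite /low r0; set s := r^-1 - 1.
have s0 : 0 <= s by rewrite /s subr_ge0 invf_ge1.
apply: le_trans (interp_inv_ge (ltW (truncnS_gt s))).
apply: b_homo; first exact: ltW.
rewrite -[r]invrK lef_pV2 ?posrE ?invr_gt0 // -natr1.
have : (Num.truncn s)%:R <= s by rewrite truncn_le.
by rewrite /s; lra.
Qed.

Let low_continuous : continuous low.
Proof.
have interp_inv_continuous : continuous interp_inv.
  move=> x; apply: cvgB; first exact: cvg_cst.
  apply: (@continuous_comp _ _ _ (fun s : R => s - 2) (psum_interp vstep) x).
    by apply: cvgB; [exact: cvg_id|exact: cvg_cst].
  exact: psum_interp_continuous.
move=> x; have [x0|x0|->] := ltgtP x 0.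
- have near_eq : \forall s \near x, 0 = low s.
    apply/nbhs_normP; exists (- x); first by rewrite /= oppr_gt0.
    move=> s; rewrite /ball_ /= ltr_norml => /andP[sx _].
    by rewrite /low ifF //; apply/negbTE; rewrite -leNgt; lra.
  apply: cvg_trans (near_eq_cvg near_eq) _.
  by rewrite /low ifF; [exact: cvg_cst|apply/negbTE; rewrite -leNgt ltW].
- have near_eq : \forall s \near x, interp_inv (s^-1 - 1) = low s.
    apply/nbhs_normP; exists x => // s; rewrite /ball_ /= ltr_norml => /andP[_ sx].
    by rewrite /low ifT //; lra.
  apply: cvg_trans (near_eq_cvg near_eq) _; rewrite /low x0.
  apply: (@continuous_comp _ _ _ (fun s : R => s^-1 - 1) interp_inv x).
    by apply: cvgB; [apply: inv_continuous; rewrite gt_eqF|exact: cvg_cst].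
  exact: interp_inv_continuous.
- apply/cvgrPdist_le => e e0.
  have [d [d0 bd]] := b_small e0; set k := Num.truncn d^-1.
  have vk : vgrid k <= e.
    apply: bd; first by rewrite invr_ge0.
    by rewrite -[d]invrK lef_pV2 ?posrE ?invr_gt0 //; apply/ltW/truncnS_gt.
  apply/nbhs_normP; exists (k.+2%:R)^-1; first by rewrite /= invr_gt0.
  move=> t; rewrite /ball_ /= sub0r normrN => tk.
  rewrite /low ltxx sub0r normrN; case: ifP => t0; last by rewrite normr0 ltW.
  rewrite ger0_norm ?interp_inv_ge0 //; apply: le_trans vk; apply: interp_inv_le.
  have : k.+2%:R < t^-1.
    by rewrite -[k.+2%:R]invrK ltf_pV2 ?posrE ?invr_gt0 // -(gtr0_norm t0).
  by rewrite -(natr1 k.+1); lra.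
Qed.

Let high_ge0 r : 0 <= high r.
Proof. by apply: psum_interp_ge0 => n; exact: b_ge0. Qed.

Let high_homo r s : r <= s -> high r <= high s.
Proof. by move=> rs; apply: psum_interp_homo; rewrite ?lerD2r. Qed.

Let high0 : high 0 = 0.
Proof.
apply/eqP; rewrite eq_le high_ge0 andbT.
have := @psum_interp_le_sum R (fun n => b n.+2%:R) (fun n => b_ge0 _) (0 - 1) 0.
by rewrite big_geq //; apply; lra.
Qed.

Let high_ge r : 1 <= r -> b r <= high r.
Proof.
move=> r1; have r0 : 0 <= r by lra.
have : (0 < Num.truncn r)%N by rewrite truncn_gt0.
case: (Num.truncn r) (truncnS_gt r) (truncn_le r) => [//|m] rm mr _.
apply: le_trans (b_homo r0 (ltW rm)) _.
apply: le_trans (psum_interp_ge_sum (fun n => b_ge0 _) (k := m.+1) _); last first.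
  by move: mr; rewrite r0 addrNK => ->.
by rewrite big_nat_recr //= lerDr sumr_ge0.
Qed.

Lemma classKinf_ge_homo : exists sg : R -> R,
  [/\ continuous sg, classKinf sg & forall r, 0 <= r -> b r <= sg r].
Proof.
(* [low] dominates [b] on ]0, 1] and [high] on [1, +oo[; the summand [r] makes [sg]
   strictly increasing and unbounded. *)
pose sg r := low r + high r + r.
have sg_continuous : continuous sg.
  move=> x; apply: cvgD; last exact: cvg_id.
  apply: cvgD; first exact: low_continuous.
  apply: (@continuous_comp _ _ _ (fun r : R => r - 1) (psum_interp _) x).
    by apply: cvgB; [exact: cvg_id|exact: cvg_cst].
  exact: psum_interp_continuous.
have sg_ge_id r : 0 <= r -> r <= sg r.
  by move=> r0; rewrite lerDr addr_ge0 ?low_ge0 ?high_ge0.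
have sg0 : sg 0 = 0 by rewrite /sg high0 /low ltxx !add0r.
exists sg; split => //.
  split; first split.
  - exact: continuous_subspaceT.
  - split; first by move=> r r0; apply: le_trans (sg_ge_id r r0).
    split => // r s r0 rs; apply: ler_ltD => //.
    by apply: lerD; [exact: low_homo (ltW rs)|exact: high_homo (ltW rs)].
  - move=> M; exists (`|M| + 1); split; first by rewrite addr_ge0.
    by apply: lt_le_trans (sg_ge_id _ _); rewrite ?addr_ge0 // ltr_pwDr ?ler_norm.
move=> r r0; have r_ge0 := sg_ge_id r r0.
have low_r := low_ge0 r; have high_r := high_ge0 r.
have [r1|r1] := leP r 1; last by have := high_ge (ltW r1); rewrite /sg; lra.
have [->|rp] := eqVneq r 0; first by rewrite sg0 b_at0.
have r_gt0 : 0 < r by rewrite lt_def rp r0.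
by have := low_ge r_gt0 r1; rewrite /sg; lra.
Qed.
End MonotoneMajorant.

Section ComparisonFunctions.
Variable R : realType.
Implicit Types (f g : R -> R) (beta : R -> R -> R).

Lemma classK_ge0 f r : classK f -> 0 <= r -> 0 <= f r.
Proof. by case=> _ [+ _]; apply. Qed.

Lemma classK_homo f r s : classK f -> 0 <= r -> r <= s -> f r <= f s.
Proof.
case=> _ [_ [f_lt _]] r0; rewrite le_eqVlt => /predU1P[->//|rs].
exact/ltW/f_lt.
Qed.

Lemma classK_small f : classK f ->
  forall e, 0 < e -> exists d, 0 < d /\ forall r, 0 <= r -> r <= d -> f r <= e.
Proof.
case=> /subspace_continuousP f_cont [_ [_ f0]] e e0.
have /cvgrPdist_lt/(_ e e0) := f_cont 0 (lexx 0).
rewrite near_withinE => /nbhs_normP[d /= d0 fd].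
exists (d / 2); split; first lra.
move=> r r0 rd; have := fd r; rewrite /ball_ /from_subspace /= f0 !sub0r !normrN ger0_norm //.
by move=> /(_ ltac:(lra) r0) /(le_lt_trans (ler_norm _)) /ltW.
Qed.

Lemma classK_add f g : classK f -> classK g -> classK (fun r => f r + g r).
Proof.
move=> [f_cont [f_ge0 [f_lt f0]]] [g_cont [g_ge0 [g_lt g0]]]; split.
  by move=> x; apply: cvgD; [exact: f_cont|exact: g_cont].
split; first by move=> r r0; rewrite addr_ge0 ?f_ge0 ?g_ge0.
by split; [move=> r s r0 rs; rewrite ltrD ?f_lt ?g_lt|rewrite f0 g0 addr0].
Qed.

Lemma classKinf_addl f g : classK f -> classKinf g -> classKinf (fun r => f r + g r).
Proof.
move=> fK [gK g_unbounded]; split; first exact: classK_add.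
move=> M; have [r [r0 Mg]] := g_unbounded M; exists r; split => //.
exact: ltr_wpDl (classK_ge0 fK r0) Mg.
Qed.

Lemma classKinf_id : classKinf (@id R).
Proof.
split; last by move=> M; exists (`|M| + 1); rewrite addr_ge0 // ltr_pwDr ?ler_norm.
by split; [apply: continuous_subspaceT => x; exact: cvg_id|split].
Qed.

Lemma classL_small f : classL f -> forall e, 0 < e -> exists T, forall t, T <= t -> f t <= e.
Proof.
case=> _ [_ [_ /cvgrPdist_lt f_lim]] e e0; have [T [_ fT]] := f_lim e e0.
exists (T + 1) => t Tt; have := fT t; rewrite sub0r normrN.
by move=> /(_ ltac:(lra)) /(le_lt_trans (ler_norm _)) /ltW.
Qed.

Lemma classKL_K beta t : classKL beta -> 0 <= t -> classK (beta^~ t).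
Proof. by case=> + _; apply. Qed.

Lemma classKL_homo beta r s t : classKL beta -> 0 <= t -> 0 <= r -> r <= s ->
  beta r t <= beta s t.
Proof. by move=> betaKL t0; apply: classK_homo (classKL_K betaKL t0). Qed.

Lemma classKL_le0 beta r t : classKL beta -> 0 <= r -> 0 <= t -> beta r t <= beta r 0.
Proof.
move=> betaKL r0 t0; have [->|rp] := eqVneq r 0.
  by have [_ [_ [_ ->]]] := classKL_K betaKL t0; exact: classK_ge0 (classKL_K _ _) _.
have [_ /(_ r) []] := betaKL; first by rewrite lt_def rp r0.
move=> _ [_ [beta_lt _]]; move: t0; rewrite le_eqVlt => /predU1P[<-//|t0].
exact/ltW/beta_lt.
Qed.

Lemma classKL_small beta r : classKL beta -> 0 < r ->
  forall e, 0 < e -> exists T, forall t, T <= t -> beta r t <= e.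
Proof. by case=> _ betaL r0; apply: classL_small (betaL r r0). Qed.

End ComparisonFunctions.

Definition vanishes_at0 (R : realType) (Z : R -> R -> Prop) :=
  forall e, 0 < e -> exists d, 0 < d /\ forall r v, 0 <= r -> r <= d -> Z r v -> v <= e.

Definition bounded_on_balls (R : realType) (Z : R -> R -> Prop) :=
  forall C, exists M, forall r v, 0 <= r -> r <= C -> Z r v -> v <= M.

Lemma classKinf_ge_rel (R : realType) (Z : R -> R -> Prop) :
  vanishes_at0 Z -> bounded_on_balls Z -> exists sg : R -> R,
  [/\ continuous sg, classKinf sg & forall r v, 0 <= r -> Z r v -> v <= sg r].
Proof.
move=> Z_small Z_bounded.
pose E r := [set v : R | v = 0 \/ exists r', [/\ 0 <= r', r' <= r & Z r' v]].
have E_sup r : has_sup (E r).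
  split; first by exists 0; left.
  have [M ZM] := Z_bounded r; exists (Num.max M 0) => v [->|[r' [r'0 r'r Zr']]].
    by rewrite le_max lexx orbT.
  by rewrite le_max (ZM r' v r'0 r'r Zr').
pose b r := sup (E r).
have b_ge0 r : 0 <= b r by apply: sup_upper_bound (E_sup r) _ _; left.
have b_homo r s : 0 <= r -> r <= s -> b r <= b s.
  move=> r0 rs; apply: ge_sup; first by exists 0; left.
  move=> v [->|[r' [r'0 r'r Zr']]]; first exact: b_ge0.
  by apply: sup_upper_bound (E_sup s) _ _; right; exists r'; split => //; exact: le_trans rs.
have b_small e : 0 < e -> exists d, 0 < d /\ forall r, 0 <= r -> r <= d -> b r <= e.
  move=> e0; have [d [d0 Zd]] := Z_small e e0; exists d; split => // r r0 rd.
  apply: ge_sup; first by exists 0; left.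
  move=> v [->|[r' [r'0 r'r Zr']]]; first exact: ltW.
  exact: (Zd r' v r'0 (le_trans r'r rd) Zr').
have [sg [sg_cont sgK sg_ge]] := classKinf_ge_homo b_ge0 b_homo b_small.
exists sg; split => // r v r0 Zr; apply: le_trans (sg_ge r r0).
by apply: sup_upper_bound (E_sup r) _ _; right; exists r.
Qed.

Section KLConstruction.
Variable R : realType.

Lemma invn1_continuous : continuous (fun t : R => (`|t| + 1)^-1).
Proof.
move=> x; apply: (@continuous_comp _ _ _ (fun t : R => `|t| + 1) GRing.inv x).
  by apply: cvgD; [apply: cvg_norm; exact: cvg_id|exact: cvg_cst].
by apply: inv_continuous; rewrite gt_eqF // ltr_wpDl.
Qed.

Lemma invn1_gt0 (t : R) : 0 < (`|t| + 1)^-1.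
Proof. by rewrite invr_gt0 ltr_wpDl. Qed.

Lemma invn1_lt (s t : R) : 0 <= s -> s < t -> (`|t| + 1)^-1 < (`|s| + 1)^-1.
Proof.
move=> s0 st; rewrite ltf_pV2 ?posrE ?(ltr_wpDl (normr_ge0 _) ltr01) //.
rewrite ltrD2r !ger0_norm //.
exact: le_trans (ltW st).
Qed.

Lemma invn1_cvg0 : (`|t| + 1)^-1 @[t --> +oo] --> (0 : R).
Proof.
apply/cvgrPdist_le => e e0; exists e^-1; split => [|t et]; first exact: num_real.
rewrite sub0r normrN ger0_norm ?(ltW (invn1_gt0 t)) //.
rewrite -[e]invrK lef_pV2 ?posrE ?invr_gt0 ?(ltr_wpDl (normr_ge0 _) ltr01) //.
by apply: le_trans (ltW et) _; rewrite ler_wpDr ?ler_norm.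
Qed.

Section ComposeInvn1.
Variable lh : R -> R.
Hypotheses (lh_cont : continuous lh) (lhK : classK lh).

Lemma continuous_comp_invn1 : continuous (fun t : R => lh (`|t| + 1)^-1).
Proof.
move=> t; apply: (@continuous_comp _ _ _ (fun t : R => (`|t| + 1)^-1) lh t).
  exact: invn1_continuous.
exact: lh_cont.
Qed.

Lemma classL_comp_invn1 : classL (fun t : R => lh (`|t| + 1)^-1).
Proof.
have lh_ge0 (t : R) : 0 <= lh (`|t| + 1)^-1 by exact: classK_ge0 lhK (ltW (invn1_gt0 t)).
split; first exact/continuous_subspaceT/continuous_comp_invn1.
split=> //; split.
  move=> s t s0 st; have [_ [_ [lh_lt _]]] := lhK.
  exact: lh_lt (ltW (invn1_gt0 t)) (invn1_lt s0 st).
have [_ [_ [_ lh0]]] := lhK.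
by apply: cvg_comp invn1_cvg0 _; rewrite -[X in _ `=>` nbhs X]lh0; exact: lh_cont.
Qed.

End ComposeInvn1.

Definition uniformly_attractive (W : R -> R -> R -> Prop) :=
  forall r e, 0 < e -> exists T, forall r' t v,
    0 <= r' -> r' <= r -> 0 <= t -> T <= t -> W r' t v -> v <= e.

Section DecayBound.
Variables (W : R -> R -> R -> Prop) (sh : R -> R).
Hypothesis shK : classK sh.
Hypothesis W_le_sh : forall r t v, 0 <= r -> 0 <= t -> W r t v -> v <= sh r.
Hypothesis W_attractive : uniformly_attractive W.

(* Dividing by [c k] makes the bounds for [r <= k + 1] at most [2^-k], so that a
   single decay rate in [t] serves all [r] at once. *)
Let c (k : nat) : R := 2 ^+ k * (sh k.+1%:R + 1).

Let c_ge1 k : 1 <= c k.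
Proof.
rewrite mulr_ege1 ?exprn_ege1 //; first lra.
by rewrite lerDr (classK_ge0 shK).
Qed.

Let W_scaled_le k r t v : 0 <= r -> r <= k.+1%:R -> 0 <= t -> W r t v ->
  v / c k <= (2 ^+ k)^-1.
Proof.
move=> r0 rk t0 Wv; have c0 : 0 < c k by apply: lt_le_trans (c_ge1 k).
rewrite ler_pdivrMr // /c mulrA mulVf ?expf_neq0 // mul1r.
have := W_le_sh r0 t0 Wv; have := classK_homo shK r0 rk; lra.
Qed.

Let scaled_decay : exists lh : R -> R,
  [/\ continuous lh, classKinf lh & forall k r t v,
    0 <= r -> r <= k.+1%:R -> 0 <= t -> W r t v -> v / c k <= lh (t + 1)^-1].
Proof.
pose Z q v := exists k r t v', [/\ 0 <= t, q = (t + 1)^-1, 0 <= r & r <= k.+1%:R]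
  /\ W r t v' /\ v = v' / c k.
suff [lh [lh_cont lhK lh_ge]] : exists lh : R -> R,
    [/\ continuous lh, classKinf lh & forall q v, 0 <= q -> Z q v -> v <= lh q].
  exists lh; split => // k r t v r0 rk t0 Wv; apply: lh_ge; first by rewrite invr_ge0 addr_ge0.
  by exists k, r, t, v.
apply: classKinf_ge_rel; rewrite /Z; last first.
  move=> C; exists 1 => q v _ _ [k [r [t [v' [[t0 _ r0 rk] [Wv ->]]]]]].
  apply: le_trans (W_scaled_le r0 rk t0 Wv) _.
  by rewrite invf_le1 ?exprn_gt0 // exprn_ege1 ?ler1n.
move=> e e0; set K := Num.truncn e^-1.
have K_small : (2 ^+ K)^-1 < e.
  have eK : e^-1 < K.+1%:R := truncnS_gt e^-1.
  have K2 : (K.+1%:R : R) <= 2 ^+ K by rewrite -natrX ler_nat ltn_expl.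
  by rewrite -[X in _ < X]invrK ltf_pV2 ?posrE ?invr_gt0 ?exprn_gt0 //; lra.
have [T WT] := W_attractive K.+1%:R e0.
exists (`|T| + 1)^-1; split; first exact: invn1_gt0.
move=> q v _ qT [k [r [t [v' [[t0 qE r0 rk] [Wv ->]]]]]].
have Tt : T <= t.
  move: qT; rewrite qE lef_pV2 ?posrE ?(ltr_wpDl t0 ltr01) ?(ltr_wpDl (normr_ge0 _) ltr01) //.
  by rewrite lerD2r; apply: le_trans; exact: ler_norm.
have c0 : 0 < c k by apply: lt_le_trans (c_ge1 k).
have [kK|Kk] := ltnP k K.
  have v'e : v' <= e.
    by apply: WT Wv => //; apply: le_trans rk _; rewrite ler_nat ltnS ltnW.
  have [v'0|v'0] := leP v' 0.
    by apply: le_trans (ltW e0); rewrite pmulr_lle0 // invr_gt0.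
  by apply: le_trans v'e; rewrite ler_pdivrMr // ler_peMr ?c_ge1 // ltW.
apply/ltW/(le_lt_trans _ K_small); apply: le_trans (W_scaled_le r0 rk t0 Wv) _.
by rewrite lef_pV2 ?posrE ?exprn_gt0 // ler_weXn2l // ler1n.
Qed.

Lemma decay_bound : exists rho ell : R -> R,
  [/\ continuous rho /\ continuous ell, forall r, 0 <= rho r,
      {homo rho : r s / r <= s}, classL ell &
      forall r t v, 0 <= r -> 0 <= t -> W r t v -> v <= rho r * ell t].
Proof.
have c_ge0 k : 0 <= c k by apply: le_trans (c_ge1 k).
have [lh [lh_cont lhK lh_ge]] := scaled_decay.
exists (psum_interp c), (fun t : R => lh (`|t| + 1)^-1); split.
- by split; [exact: psum_interp_continuous|exact: continuous_comp_invn1].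
- exact: psum_interp_ge0.
- exact: psum_interp_homo.
- exact: classL_comp_invn1 lh_cont (proj1 lhK).
move=> r t v r0 t0 Wv; set k := Num.truncn r.
have c_le_rho : c k <= psum_interp c r.
  apply: le_trans (psum_interp_ge_sum c_ge0 (k := k.+1) _).
    by rewrite big_nat_recr //= lerDr sumr_ge0.
  by rewrite -natr1 lerD2r truncn_le.
have := lh_ge k r t v r0 (ltW (truncnS_gt r)) t0 Wv.
rewrite ger0_norm // ler_pdivrMr ?(lt_le_trans _ (c_ge1 k)) // => v_le.
apply: le_trans v_le _; rewrite mulrC ler_wpM2r //.
by apply: classK_ge0 (proj1 lhK) _; rewrite invr_ge0 addr_ge0.
Qed.

End DecayBound.

Section KLOfBounds.
Variables (sigma rho ell : R -> R).
Hypotheses (sigma_cont : continuous sigma) (sigmaK : classK sigma).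
Hypotheses (rho_cont : continuous rho) (rho_ge0 : forall r, 0 <= rho r).
Hypothesis rho_homo : {homo rho : r s / r <= s}.
Hypotheses (ell_cont : continuous ell) (ellL : classL ell).

(* The term [r / (|t| + 1)] only makes the bound strictly monotone in both variables. *)
Let beta r t := Num.min (sigma r) (rho r * ell t) + r * (`|t| + 1)^-1.

Let ell_ge0 t : 0 <= t -> 0 <= ell t.
Proof. by case: ellL => _ [+ _]; apply. Qed.

Let ell_homo s t : 0 <= s -> s <= t -> ell t <= ell s.
Proof.
case: ellL => _ [_ [ell_lt _]] s0; rewrite le_eqVlt => /predU1P[->//|st].
exact/ltW/ell_lt.
Qed.

Let beta_ge0 r t : 0 <= r -> 0 <= t -> 0 <= beta r t.
Proof.
move=> r0 t0; rewrite addr_ge0 ?mulr_ge0 ?(ltW (invn1_gt0 t)) //.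
by rewrite le_min (classK_ge0 sigmaK) ?mulr_ge0 ?ell_ge0.
Qed.

Lemma classKL_min_decay : classKL beta.
Proof.
split=> [t t0|r r0].
  split.
    apply: continuous_subspaceT => r; apply: cvgD.
      apply: (@continuous_min R R sigma (fun r => rho r * ell t) r); first exact: sigma_cont.
      by apply: cvgM; [exact: rho_cont|exact: cvg_cst].
    by apply: cvgM; [exact: cvg_id|exact: cvg_cst].
  split; first by move=> r r0; exact: beta_ge0.
  split=> [a b a0 ab|].
    apply: ler_ltD; last by rewrite ltr_pM2r ?invn1_gt0.
    apply: le_min2; first exact: classK_homo sigmaK a0 (ltW ab).
    by apply: ler_wpM2r; [exact: ell_ge0|exact: rho_homo (ltW ab)].
  have [_ [_ [_ sigma0]]] := sigmaK.
  by rewrite /beta sigma0 mul0r addr0 min_l // mulr_ge0 ?ell_ge0.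
split.
  apply: continuous_subspaceT => t; apply: cvgD.
    apply: (@continuous_min R R (fun=> sigma r) (fun t => rho r * ell t) t).
      exact: cvg_cst.
    by apply: cvgM; [exact: cvg_cst|exact: ell_cont].
  by apply: cvgM; [exact: cvg_cst|exact: invn1_continuous].
split; first by move=> t t0; exact: beta_ge0 (ltW r0) t0.
split=> [a b a0 ab|].
  apply: ler_ltD; last by rewrite ltr_pM2l ?invn1_lt.
  by apply: le_min2 => //; apply: ler_wpM2l => //; apply: ell_homo => //; exact: ltW.
apply: (@squeeze_cvgr _ _ _ _ (fun=> 0) (fun t => rho r * ell t + r * (`|t| + 1)^-1)).
- near=> t; have t0 : 0 <= t by near: t; apply: nbhs_pinfty_ge.
  by rewrite beta_ge0 ?(ltW r0) //= /beta lerD2r ge_min lexx orbT.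
- exact: cvg_cst.
- rewrite -[0]addr0; apply: cvgD.
    by rewrite -(mulr0 (rho r)); apply: cvgM; [exact: cvg_cst|case: ellL => _ [_ []]].
  by rewrite -(mulr0 r); apply: cvgM; [exact: cvg_cst|exact: invn1_cvg0].
Unshelve. all: by end_near.
Qed.

End KLOfBounds.

Lemma classKL_ge (W : R -> R -> R -> Prop) :
  let Wt r v := exists2 t, 0 <= t & W r t v in
  vanishes_at0 Wt -> bounded_on_balls Wt -> uniformly_attractive W ->
  exists beta, classKL beta /\ forall r t v, 0 <= r -> 0 <= t -> W r t v -> v <= beta r t.
Proof.
move=> Wt W_small W_bounded W_attractive.
have [sh [sh_cont shK sh_ge]] := classKinf_ge_rel W_small W_bounded.
have W_le_sh r t v : 0 <= r -> 0 <= t -> W r t v -> v <= sh r.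
  by move=> r0 t0 Wv; apply: sh_ge r0 _; exists t.
have [rho [ell [[rho_cont ell_cont] rho_ge0 rho_homo ellL W_le]]] :=
  decay_bound (proj1 shK) W_le_sh W_attractive.
exists (fun r t => Num.min (sh r) (rho r * ell t) + r * (`|t| + 1)^-1); split.
  exact: classKL_min_decay sh_cont (proj1 shK) rho_cont rho_ge0 rho_homo ell_cont ellL.
move=> r t v r0 t0 Wv; apply: (@le_trans _ _ (Num.min (sh r) (rho r * ell t))).
  by rewrite le_min (W_le_sh _ _ _ r0 t0 Wv) (W_le _ _ _ r0 t0 Wv).
by rewrite lerDl mulr_ge0 // ltW // invn1_gt0.
Qed.

End KLConstruction.

Lemma time_ge0 (R : realType) (I : timedom) (t : time R I) : 0 <= proj1_sig t.
Proof. exact: (proj1 (proj2_sig t)). Qed.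

Lemma exists_time_ge (R : realType) (I : timedom) (T : R) :
  exists tau : time R I, T <= proj1_sig tau.
Proof.
have n_in_I : inI I ((Num.truncn T).+1%:R : R) by split => // _; eexists.
by exists (exist _ _ n_in_I); apply/ltW/truncnS_gt.
Qed.

Section ControlSystemProperties.
Variables (R : realType) (I : timedom) (X : normedModType R) (U : lmodType R)
  (Y : normedModType R) (S : ControlSystem R I X U Y).
Local Notation y := (yout S).
Local Notation tv := (@proj1_sig R (inI I)).

Lemma OUGS_of_small_bounded :
  (forall e, 0 < e -> exists d, 0 < d /\ forall x u t, Uin S u ->
     `|x| <= d -> Unorm S u <= d -> `|y t x u| <= e) ->
  (forall C, exists M, forall x u t, Uin S u ->
     `|x| <= C -> Unorm S u <= C -> `|y t x u| <= M) ->
  OUGS S.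
Proof.
move=> y_small y_bounded.
pose Z r v := exists x u t, [/\ Uin S u, `|x| <= r, Unorm S u <= r & v = `|y t x u|].
have Z_small : vanishes_at0 Z.
  move=> e e0; have [d [d0 yd]] := y_small e e0; exists d; split => //.
  by move=> r v _ rd [x [u [t [Su xr ur ->]]]]; exact: yd Su (le_trans xr rd) (le_trans ur rd).
have Z_bounded : bounded_on_balls Z.
  move=> C; have [M yM] := y_bounded C; exists M.
  by move=> r v _ rC [x [u [t [Su xr ur ->]]]]; exact: yM Su (le_trans xr rC) (le_trans ur rC).
have [sg [_ sgK sg_ge]] := classKinf_ge_rel Z_small Z_bounded.
exists sg, sg; split => //; split => // x u t Su.
have [x_ge0 u_ge0] := (normr_ge0 x, Unorm_ge0 Su).
have [sg_x sg_u] := (classK_ge0 (proj1 sgK) x_ge0, classK_ge0 (proj1 sgK) u_ge0).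
have [xu|ux] := leP `|x| (Unorm S u).
  have : Z (Unorm S u) `|y t x u| by exists x, u, t.
  by move=> /(sg_ge _ _ u_ge0); lra.
have : Z `|x| `|y t x u| by exists x, u, t; split => //; exact: ltW.
by move=> /(sg_ge _ _ x_ge0); lra.
Qed.

Lemma IOS_OUGS : IOS S -> OUGS S.
Proof.
move=> [beta [gamma [betaKL [gammaK y_le]]]].
exists (fun r => beta r 0 + r), gamma; split => //.
  apply: (@classKinf_addl _ (beta^~ 0) id); [exact: classKL_K betaKL (lexx 0)|exact: classKinf_id].
split => // x u t Su; apply: le_trans (y_le x u t Su) _; rewrite lerD2r.
by rewrite (le_trans (classKL_le0 betaKL (normr_ge0 x) (time_ge0 t))) ?lerDl.
Qed.

Lemma IOS_OCAG : IOS S -> OCAG S.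
Proof.
move=> [beta [gamma [betaKL [gammaK y_le]]]]; exists beta, gamma, 0.
by do 3 split => //; move=> x u t Su; rewrite addr0; exact: y_le.
Qed.

Lemma OCAG_OUAG : OCAG S -> OUAG S.
Proof.
move=> [beta [gamma [c [betaKL [gammaK [c0 y_le]]]]]]; exists gamma; split => //.
move=> e r s e0 r0 s0; have [T betaT] := classKL_small betaKL (ltr_wpDr c0 r0) e0.
have [tau Ttau] := exists_time_ge I T.
exists tau => x u t Su xr _ tau_t; apply: le_trans (y_le x u t Su) _; rewrite lerD2r.
apply: le_trans (betaT _ (le_trans Ttau tau_t)).
apply: (classKL_homo betaKL (time_ge0 t)); first by rewrite addr_ge0.
by rewrite lerD2r ltW.
Qed.

Lemma OCAG_BORS : OCAG S -> BORS S.
Proof.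
move=> [beta [gamma [c [betaKL [gammaK [c0 y_le]]]]]] C tau C0.
exists (beta (C + c) 0 + gamma C) => x u t Su xC uC _.
apply: le_trans (y_le x u t Su) _; apply: lerD.
  have xc0 : 0 <= `|x| + c by rewrite addr_ge0.
  apply: le_trans (classKL_le0 betaKL xc0 (time_ge0 t)) _.
  by apply: (classKL_homo betaKL (lexx 0) xc0); rewrite lerD2r ltW.
exact: classK_homo (proj1 gammaK) (Unorm_ge0 Su) (ltW uC).
Qed.

Lemma OUGS_OULS : OUGS S -> OULS S.
Proof.
by move=> [sigma [gamma [sigmaK [gammaK y_le]]]]; exists 1, sigma, gamma; do 3 split => //;
  move=> x u t Su _ _; exact: y_le.
Qed.

Lemma OULS_OCEP : OULS S -> OCEP S.
Proof.
move=> [r [sigma [gamma [r0 [sigmaK [gammaK y_le]]]]]] tau e e0.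
have [d [d0 sum_small]] := classK_small (classK_add (proj1 sigmaK) (proj1 gammaK)) e0.
exists (Num.min d (r / 2)); split; first by rewrite lt_min d0 /=; lra.
move=> x u t Su _; rewrite !le_min => /andP[xd xr] /andP[ud ur].
set m := Num.max `|x| (Unorm S u).
have m0 : 0 <= m by rewrite le_max normr_ge0.
apply: le_trans (y_le x u t Su _ _) _; try lra.
apply: le_trans (sum_small m m0 _); last by rewrite ge_max xd.
apply: lerD; apply: classK_homo; rewrite ?normr_ge0 ?(Unorm_ge0 Su) ?le_max ?lexx ?orbT //.
exact: proj1 sigmaK.
exact: proj1 gammaK.
Qed.

Lemma OUAG_OCEP_BORS_OUGS : OUAG S -> OCEP S -> BORS S -> OUGS S.
Proof.
move=> [gA [gAK y_attr]] y_cont y_bnd; apply: OUGS_of_small_bounded.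
  move=> e e0; have e2 : 0 < e / 2 by lra.
  have [tau y_late] := y_attr (e / 2) 1 1 e2 ltr01 ltr01.
  have [d1 [d10 y_early]] := y_cont tau (e / 2) e2.
  have [d2 [d20 gA_small]] := classK_small (proj1 gAK) e2.
  exists (Num.min d1 (Num.min d2 (1 / 2))); split; first by rewrite !lt_min d10 d20 /=; lra.
  move=> x u t Su; rewrite !le_min => /and3P[xd1 _ x1] /and3P[ud1 ud2 u1].
  have [t_early|t_late] := leP (tv t) (tv tau).
    by have := y_early x u t Su t_early xd1 ud1; lra.
  have := y_late x u t Su ltac:(lra) ltac:(lra) (ltW t_late).
  by have := gA_small _ (Unorm_ge0 Su) ud2; lra.
move=> C; set C' := `|C| + 1; have C'0 : 0 < C' by rewrite ltr_wpDl.
have CC' : C < C' by have := ler_norm C; rewrite /C'; lra.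
have [tau y_late] := y_attr 1 C' C' ltr01 C'0 C'0.
have [M y_early] := y_bnd C' tau C'0.
exists (Num.max M (1 + gA C')) => x u t Su xC uC; rewrite le_max.
have [t_early|t_late] := ltP (tv t) (tv tau).
  by rewrite (y_early x u t Su) //; lra.
apply/orP; right; apply: le_trans (y_late x u t Su _ _ t_late) _; try lra.
by rewrite lerD2l; apply: classK_homo (proj1 gAK) (Unorm_ge0 Su) _; lra.
Qed.

Lemma excess_classKL_bound (gA : R -> R) : classKinf gA -> OUGS S ->
  (forall e r s : R, 0 < e -> 0 < r -> 0 < s -> exists tau : time R I,
    forall x u (t : time R I), Uin S u -> `|x| < r -> Unorm S u < s ->
    tv tau <= tv t -> `|y t x u| <= e + gA (Unorm S u)) ->
  exists beta, classKL beta /\ forall x u t, Uin S u -> Unorm S u <= `|x| ->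
    `|y t x u| <= beta `|x| (tv t) + gA (Unorm S u).
Proof.
move=> gAK [sigma [gamma [sigmaK [gammaK y_le]]]] y_attr.
have gA_ge0 u : Uin S u -> 0 <= gA (Unorm S u).
  by move=> Su; exact: classK_ge0 (proj1 gAK) (Unorm_ge0 Su).
pose W r t v := exists x u t', [/\ Uin S u, `|x| <= r, Unorm S u <= r & tv t' = t]
  /\ v = `|y t' x u| - gA (Unorm S u).
have [beta [betaKL W_le]] : exists beta, classKL beta /\
    forall r t v, 0 <= r -> 0 <= t -> W r t v -> v <= beta r t.
  apply: classKL_ge.
  - move=> e e0; have [d [d0 sum_small]] :=
      classK_small (classK_add (proj1 sigmaK) (proj1 gammaK)) e0.
    exists d; split => // r v r0 rd [t _ [x [u [t' [[Su xr ur _] ->]]]]].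
    have := y_le x u t' Su; have := gA_ge0 u Su; have := sum_small r r0 rd.
    have := classK_homo (proj1 sigmaK) (normr_ge0 x) xr.
    have := classK_homo (proj1 gammaK) (Unorm_ge0 Su) ur; lra.
  - move=> C; exists (sigma `|C| + gamma `|C|).
    move=> r v r0 rC [t _ [x [u [t' [[Su xr ur _] ->]]]]].
    have rC' : r <= `|C| by apply: le_trans rC (ler_norm C).
    have := y_le x u t' Su; have := gA_ge0 u Su.
    have := classK_homo (proj1 sigmaK) (normr_ge0 x) (le_trans xr rC').
    have := classK_homo (proj1 gammaK) (Unorm_ge0 Su) (le_trans ur rC'); lra.
  - move=> r e e0; set r' := `|r| + 1; have r'0 : 0 < r' by rewrite ltr_wpDl.
    have rr' : r < r' by have := ler_norm r; rewrite /r'; lra.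
    have [tau y_late] := y_attr e r' r' e0 r'0 r'0.
    exists (tv tau) => r1 t v r10 r1r _ tau_t [x [u [t' [[Su xr ur t'E] ->]]]].
    rewrite -t'E in tau_t.
    by have := y_late x u t' Su ltac:(lra) ltac:(lra) tau_t; lra.
exists beta; split => // x u t Su ux.
have Wx : W `|x| (tv t) (`|y t x u| - gA (Unorm S u)) by exists x, u, t.
by have := W_le _ _ _ (normr_ge0 x) (time_ge0 t) Wx; lra.
Qed.

Lemma OUAG_OUGS_IOS : OUAG S -> OUGS S -> IOS S.
Proof.
move=> [gA [gAK y_attr]] ougs.
have [beta [betaKL y_le_beta]] := excess_classKL_bound gAK ougs y_attr.
have [sigma [gamma [sigmaK [gammaK y_le]]]] := ougs.
exists beta, (fun r => sigma r + gamma r + gA r); split => //; split.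
  exact: classKinf_addl (classK_add (proj1 sigmaK) (proj1 gammaK)) gAK.
move=> x u t Su; have u0 := Unorm_ge0 Su.
have := classK_ge0 (classKL_K betaKL (time_ge0 t)) (normr_ge0 x).
have := classK_ge0 (proj1 sigmaK) u0; have := classK_ge0 (proj1 gammaK) u0.
have := classK_ge0 (proj1 gAK) u0.
have [xu|/ltW ux] := leP `|x| (Unorm S u); last by have := y_le_beta x u t Su ux; lra.
by have := y_le x u t Su; have := classK_homo (proj1 sigmaK) (normr_ge0 x) xu; lra.
Qed.

End ControlSystemProperties.

Theorem theorem1 (R : realType) (I : timedom) (X : normedModType R)
    (U : lmodType R) (Y : normedModType R) (S : ControlSystem R I X U Y) :
  (IOS S <-> OUAG S /\ OCEP S /\ BORS S) /\
  (IOS S <-> OUAG S /\ OULS S /\ BORS S) /\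
  (IOS S <-> OUAG S /\ OUGS S) /\
  (IOS S <-> OCAG S /\ OULS S).
Proof.
have IOS_OULS : IOS S -> OULS S by move=> /IOS_OUGS /OUGS_OULS.
have IOS_iff : IOS S <-> OUAG S /\ OCEP S /\ BORS S.
  split=> [IOS_S|[ouag [ocep bors]]].
    have ocag := IOS_OCAG IOS_S.
    by split; [exact: OCAG_OUAG|split; [exact/OULS_OCEP/IOS_OULS|exact: OCAG_BORS]].
  exact: OUAG_OUGS_IOS ouag (OUAG_OCEP_BORS_OUGS ouag ocep bors).
split=> //; split; [|split].
- split=> [IOS_S|[ouag [ouls bors]]].
    by have [ouag [_ bors]] := IOS_iff.1 IOS_S; split => //; split => //; exact: IOS_OULS.
  by apply/IOS_iff; split => //; split => //; exact: OULS_OCEP.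
- split=> [IOS_S|[ouag ougs]]; last exact: OUAG_OUGS_IOS.
  by split; [exact: (IOS_iff.1 IOS_S).1|exact: IOS_OUGS].
- split=> [IOS_S|[ocag ouls]]; first by split; [exact: IOS_OCAG|exact: IOS_OULS].
  by apply/IOS_iff; split; [exact: OCAG_OUAG|split; [exact: OULS_OCEP|exact: OCAG_BORS]].
Qed.
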